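(* Let $A,B\in\mathbb{Z}$ with $|A|\leq B$ and $B\geq 2$. Let $\tilde M\in\mathbb{Z}^{2\times 2}$ have characteristic polynomial $x^2+Ax+B$ and let $\mathbf{v}\in\mathbb{Z}^2$ be such that $(\mathbf{v},\tilde M\mathbf{v})$ is linearly independent. Let $\tilde T$ be the unique nonempty compact set with $$\tilde M\tilde T+\frac{B-1}{2}\mathbf{v}=\tilde T\cup(\tilde T+\mathbf{v})\cup\cdots\cup(\tilde T+(B-2)\mathbf{v})\cup(-\tilde T),$$ and let $T$ be the unique nonempty compact set with $$MT+\begin{pmatrix}\frac{B-1}{2}\\0\end{pmatrix}=T\cup\left(T+\begin{pmatrix}1\\0\end{pmatrix}\right)\cup\cdots\cup\left(T+\begin{pmatrix}B-2\\0\end{pmatrix}\right)\cup(-T),\qquad M=\begin{pmatrix}0&-B\\1&-A\end{pmatrix}.$$ Let $C$ be the change-of-base matrix from the canonical basis to the basis $(\mathbf{v},\tilde M\mathbf{v})$, i.e. the matrix whose columns are $\mathbf{v}$ and $\tilde M\mathbf{v}$. Then $\tilde T=CT$.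
   Context: When $B=2$ the unions on the right-hand sides reduce to $\tilde T\cup(-\tilde T)$ and $T\cup(-T)$ respectively. *)

From HB Require Import structures.
From mathcomp Require Import all_boot all_order all_algebra.
From mathcomp Require Import all_classical all_reals all_analysis.
Set Implicit Arguments. Unset Strict Implicit. Unset Printing Implicit Defensive.
Import Order.TTheory GRing.Theory Num.Theory.
Import numFieldNormedType.Exports.
Local Open Scope classical_set_scope.
Local Open Scope ring_scope.

Definition lin_img (R : realType) (M : 'M[R]_2) (S : set 'cV[R]_2) : set 'cV[R]_2 :=
  [set M *m x | x in S].

Definition transl (R : realType) (S : set 'cV[R]_2) (w : 'cV[R]_2) : set 'cV[R]_2 :=
  [set x + w | x in S].

Definition digit_union (R : realType) (B : int) (S : set 'cV[R]_2) (w : 'cV[R]_2)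
  : set 'cV[R]_2 :=
  (\bigcup_(k in [set k : nat | (k.+2)%:Z <= B]) transl S (k%:R *: w))
  `|` [set - x | x in S].

Definition set_eqn (R : realType) (B : int) (M : 'M[R]_2) (w : 'cV[R]_2)
  (S : set 'cV[R]_2) : Prop :=
  transl (lin_img M S) (((B - 1)%:~R / 2) *: w) = digit_union B S w.

Definition companion (R : realType) (A B : int) : 'M[R]_2 :=
  \matrix_(i < 2, j < 2)
    (if i == 0 then (if j == 0 then 0 else - B%:~R)
     else (if j == 0 then 1 else - A%:~R)).

Definition e1 (R : realType) : 'cV[R]_2 := \col_(i < 2) (if i == 0 then 1 else 0).

Definition toR (R : realType) m n (M : 'M[int]_(m, n)) : 'M[R]_(m, n) :=
  map_mx (fun z : int => z%:~R) M.

Definition basis_mx (R : realType) (Mt : 'M[int]_2) (v : 'cV[int]_2) : 'M[R]_2 :=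
  toR R (row_mx v (Mt *m v)).

From HB Require Import structures.
From mathcomp Require Import all_boot all_order all_algebra.
From mathcomp Require Import all_classical all_reals all_analysis.
From mathcomp Require Import ring lra.

(* Both [Tt] and [C T] solve the set equation of [Mt] and [v]: by Cayley-Hamilton,
   [Mt C = C M] and [C e1 = v] for the Krylov matrix [C = (v | Mt v)].  Nonempty
   compact solutions are unique because [Mt] is expanding: following the digits of a
   point of one solution yields points of the other whose difference stays bounded
   after multiplication by [Mt ^ n].  Expansion comes from a quadratic Lyapunov
   function for the recurrence [s (k + 2) = - A s (k + 1) - B s k], satisfied by each
   coordinate of [Mt ^ k d], run backwards; it exists because [|A| <= B] and [2 <= B]
   put the roots of [x^2 + A x + B] outside the unit disk. *)

Set Implicit Arguments.
Unset Strict Implicit.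
Unset Printing Implicit Defensive.

Import Order.TTheory GRing.Theory Num.Theory.
Import numFieldNormedType.Exports.
Local Open Scope classical_set_scope.
Local Open Scope ring_scope.

Section BackwardRecurrence.
Variable R : realFieldType.
Variables a b : R.
Hypothesis b_gt1 : 1 < b.
Hypothesis a_lt : `|a| < b + 1.

(* [V] solves the discrete Lyapunov equation [V (p, q) - V (p', p) = p^2 + q^2]
   for the backward step [p' = - (a p + q) / b] of the recurrence; it is
   positive definite because the roots of [x^2 + a x + b] lie outside the
   unit disk. *)
Let al : R := 2 * (b + 1) * b ^+ 2 / ((b - 1) * ((b + 1) ^+ 2 - a ^+ 2)).
Let r : R := a / (b * (b + 1)).
Let g : R := 1 + al / b ^+ 2 - al * r ^+ 2.
Let V (p q : R) : R := al * (p + r * q) ^+ 2 + g * q ^+ 2.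
Let lam : R := 2 * al * (1 + r ^+ 2) + g.

Let sqr_a_lt : a ^+ 2 < (b + 1) ^+ 2.
Proof.
have := b_gt1; move: a_lt; rewrite ltr_norml => /andP[? ?] ?.
by rewrite -subr_gt0 subr_sqr; apply: mulr_gt0; lra.
Qed.

Let al_gt0 : 0 < al.
Proof.
have := b_gt1; have := sqr_a_lt => ? ?.
by apply: divr_gt0; apply: mulr_gt0; nra.
Qed.

Let g_ge1 : 1 <= g.
Proof.
have := b_gt1; have := sqr_a_lt => ? ?.
have -> : g = 1 + al / b ^+ 2 * (((b + 1) ^+ 2 - a ^+ 2) / (b + 1) ^+ 2).
  by rewrite /g /r; field; apply/andP; split; apply/eqP; lra.
rewrite lerDl; apply: mulr_ge0; apply: divr_ge0; rewrite ?sqr_ge0 //; last lra.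
exact: ltW.
Qed.

Let V_backward p q : V p q - V (- (a * p + q) / b) p = p ^+ 2 + q ^+ 2.
Proof.
have := b_gt1; have := sqr_a_lt => ? ?.
rewrite /V /g /al /r; field.
by apply/and4P; split; apply/eqP; lra.
Qed.

Let V_ge_sqr p q : p ^+ 2 + q ^+ 2 <= V p q.
Proof.
rewrite -(V_backward p q) lerBlDr lerDl.
apply: addr_ge0; apply: mulr_ge0; rewrite ?sqr_ge0 //; last by have := g_ge1; lra.
exact: ltW.
Qed.

Let V_le_sqr p q : V p q <= lam * (p ^+ 2 + q ^+ 2).
Proof.
have al_ge0 := ltW al_gt0; have g_ge0 : 0 <= g by have := g_ge1; lra.
have sqr_le : (p + r * q) ^+ 2 <= 2 * (p ^+ 2 + r ^+ 2 * q ^+ 2).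
  by have := sqr_ge0 (p - r * q); rewrite !expr2; lra.
have := ler_wpM2l al_ge0 sqr_le.
have := mulr_ge0 (mulr_ge0 al_ge0 (sqr_ge0 r)) (sqr_ge0 p).
have := mulr_ge0 al_ge0 (sqr_ge0 q); have := mulr_ge0 g_ge0 (sqr_ge0 p).
rewrite /V /lam; lra.
Qed.

Lemma recurrence_backward_decay : exists c rho : R,
  [/\ 0 <= c, 0 <= rho < 1 & forall s : nat -> R,
    (forall k, s k.+2 = - a * s k.+1 - b * s k) ->
    forall n, s 0%N ^+ 2 + s 1%N ^+ 2 <= c * rho ^+ n * (s n ^+ 2 + s n.+1 ^+ 2)].
Proof.
have lam_ge1 : 1 <= lam.
  by have := al_gt0; have := g_ge1; have := sqr_ge0 r; rewrite /lam; nra.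
have rho_ge0 : 0 <= 1 - lam^-1 by rewrite subr_ge0 invf_le1 //; lra.
exists lam, (1 - lam^-1); split=> [|| s srec n]; first lra.
  by rewrite rho_ge0 /= ltrBlDr ltrDl invr_gt0; lra.
have step k : V (s k) (s k.+1) <= (1 - lam^-1) * V (s k.+1) (s k.+2).
  have -> : s k = - (a * s k.+1 + s k.+2) / b.
    by have := b_gt1 => ?; rewrite srec; field; apply/eqP; lra.
  have := V_backward (s k.+1) (s k.+2).
  have : V (s k.+1) (s k.+2) / lam <= s k.+1 ^+ 2 + s k.+2 ^+ 2.
    by rewrite ler_pdivrMr; [rewrite mulrC; apply: V_le_sqr | lra].
  by rewrite mulrBl mul1r mulrC; lra.
apply: le_trans (V_ge_sqr _ _) _; rewrite [lam * _]mulrC -mulrA.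
apply: le_trans (_ : (1 - lam^-1) ^+ n * V (s n) (s n.+1) <= _); last first.
  by rewrite ler_wpM2l ?V_le_sqr ?exprn_ge0.
elim: n => [|n IH]; first by rewrite mul1r.
by apply: le_trans IH _; rewrite exprSr -mulrA ler_wpM2l ?step // exprn_ge0.
Qed.

End BackwardRecurrence.

Section MatrixNorm.
Variable R : realFieldType.

Lemma mx_norm_entry_le m n (x : 'M[R]_(m, n)) i j : `|x i j| <= `|x|.
Proof.
rewrite [leRHS]/Num.norm /= mx_normrE.
by apply/bigmax_geP; right; exists (i, j).
Qed.

Lemma mx_norm_le m n (x : 'M[R]_(m, n)) c :
  0 <= c -> (forall i j, `|x i j| <= c) -> `|x| <= c.
Proof.
move=> c_ge0 xc; rewrite [leLHS]/Num.norm /= mx_normrE.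
by apply/bigmax_leP; split=> // ij _; apply: xc.
Qed.

Lemma mx_norm_lt m n (x : 'M[R]_(m, n)) c :
  0 < c -> (forall i j, `|x i j| < c) -> `|x| < c.
Proof.
move=> c_gt0 xc; rewrite [ltLHS]/Num.norm /= mx_normrE.
by apply/bigmax_ltP; split=> // ij _; apply: xc.
Qed.

Lemma mx_norm_mulmx_le m n p (X : 'M[R]_(m, n)) (u : 'M[R]_(n, p)) :
  `|X *m u| <= `|X| * `|u| *+ n.
Proof.
apply: mx_norm_le => [|i j]; first by rewrite mulrn_wge0 ?mulr_ge0.
rewrite mxE; apply: (le_trans (ler_norm_sum _ _ _)).
rewrite -[n in _ *+ n]card_ord -sumr_const ler_sum // => k _.
by rewrite normrM ler_pM ?mx_norm_entry_le.
Qed.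

Lemma mulmx_continuous m n p (C : 'M[R]_(m, n)) :
  continuous (fun x : 'M[R]_(n, p) => C *m x).
Proof.
apply: (@bounded_linear_continuous _ _ _ (mulmx C)).
apply/bounded_funP => r; exists (`|C| * r *+ n) => x x_le.
apply: le_trans (mx_norm_mulmx_le _ _) _.
by rewrite lerMn2r ler_wpM2l ?orbT.
Qed.

End MatrixNorm.

Definition expanding (R : numFieldType) n (X : 'M[R]_n) : Prop :=
  forall K e : R, 0 < e ->
    exists k, forall d : 'cV[R]_n, `|X ^+ k *m d| <= K -> `|d| < e.

Lemma mx_pow_recurrence (R : comNzRingType) n (X : 'M[R]_n) (a b : R)
    (d : 'cV[R]_n) k :
  X ^+ 2 = - (a *: X) - b%:M ->
  X ^+ k.+2 *m d = - a *: (X ^+ k.+1 *m d) - b *: (X ^+ k *m d).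
Proof.
move=> X2; rewrite -add2n exprD X2 exprS -!mulmxE !mulmxBl !mulNmx -!scalemxAl.
by rewrite mul_scalar_mx -scalemxAl scaleNr.
Qed.

Lemma quadratic_expanding (R : realType) n (X : 'M[R]_n) (a b : R) :
  1 < b -> `|a| < b + 1 -> X ^+ 2 = - (a *: X) - b%:M -> expanding X.
Proof.
move=> b_gt1 a_lt X2 K e e_gt0.
have [c [rho [c_ge0 /andP[rho_ge0 rho_lt1] decay]]] :=
  recurrence_backward_decay b_gt1 a_lt.
set K' := `|X| * K *+ n.
set L := c * (K ^+ 2 + K' ^+ 2) + 1.
have L_gt0 : 0 < L by rewrite ltr_pwDr ?mulr_ge0 ?addr_ge0 ?sqr_ge0.
have rho_norm_lt1 : `|rho| < 1 by rewrite ger0_norm.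
have [k _ rho_small] := cvgr0_norm_lt _ (cvg_expr rho_norm_lt1)
  _ (divr_gt0 (exprn_gt0 2 e_gt0) L_gt0).
exists k => d dK.
have K_ge0 : 0 <= K := le_trans (normr_ge0 _) dK.
apply: mx_norm_lt => // i j; rewrite (ord1 j).
pose s m := (X ^+ m *m d) i 0.
have s_rec m : s m.+2 = - a * s m.+1 - b * s m.
  by rewrite /s (mx_pow_recurrence _ _ X2) !mxE.
have sk : `|s k| <= K := le_trans (mx_norm_entry_le _ _ _) dK.
have sk1 : `|s k.+1| <= K'.
  apply: le_trans (mx_norm_entry_le _ i 0) _.
  rewrite exprS -mulmxE -mulmxA; apply: le_trans (mx_norm_mulmx_le _ _) _.
  by rewrite lerMn2r ler_wpM2l ?orbT.
have := rho_small k (leqnn k); rewrite /= ger0_norm ?exprn_ge0 // => rho_k.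
have sqr_le (x y : R) : `|x| <= y -> x ^+ 2 <= y ^+ 2.
  move=> xy; rewrite -real_normK ?num_real //.
  by apply: lerXn2r; rewrite ?nnegrE //; apply: le_trans xy.
have : c * rho ^+ k * (s k ^+ 2 + s k.+1 ^+ 2) <= rho ^+ k * (L - 1).
  rewrite [c * _]mulrC -mulrA ler_wpM2l ?exprn_ge0 // /L addrK.
  by rewrite ler_wpM2l //; apply: lerD; apply: sqr_le.
have := decay s s_rec k; rewrite /s expr0 mul1mx -/(s 1%N) -/(s k) -/(s k.+1).
move: rho_k; rewrite ltr_pdivlMr // => ? ? ?.
have : d i 0 ^+ 2 < e ^+ 2.
  by have := sqr_ge0 (s 1%N); have := exprn_ge0 k rho_ge0; lra.
by rewrite ltr_norml => ?; apply/andP; split; nra.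
Qed.

Section SetEquation.
Variables (R : realType) (B : int).
Implicit Types (X Y C : 'M[R]_2) (u w : 'cV[R]_2) (S : set 'cV[R]_2).

Lemma lin_img_comp C Y S : lin_img C (lin_img Y S) = lin_img (C *m Y) S.
Proof. by rewrite /lin_img image_comp; apply: eq_imagel => x _ /=; rewrite mulmxA. Qed.

Lemma lin_img_transl C S u : lin_img C (transl S u) = transl (lin_img C S) (C *m u).
Proof.
by rewrite /lin_img /transl !image_comp; apply: eq_imagel => x _ /=; rewrite mulmxDr.
Qed.

Lemma lin_img_digit_union C S u :
  lin_img C (digit_union B S u) = digit_union B (lin_img C S) (C *m u).
Proof.
rewrite /digit_union {1}/lin_img image_setU image_bigcup; congr (_ `|` _).
  by apply: eq_bigcupr => k _; rewrite scalemxAr; apply: lin_img_transl.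
by rewrite /lin_img !image_comp; apply: eq_imagel => x _ /=; rewrite mulmxN.
Qed.

Lemma set_eqn_conj X Y C u w S :
  X *m C = C *m Y -> C *m u = w -> set_eqn B Y u S -> set_eqn B X w (lin_img C S).
Proof.
move=> XC Cu eqS; rewrite /set_eqn lin_img_comp XC -lin_img_comp -Cu scalemxAr.
by rewrite -lin_img_transl eqS lin_img_digit_union.
Qed.

Lemma set_eqn_lift X w S1 S2 x :
  set_eqn B X w S1 -> set_eqn B X w S2 -> S1 x ->
  exists2 y, S1 y & forall y', S2 y' ->
    exists2 x', S2 x' & X *m (x - x') = y - y' \/ X *m (x - x') = y' - y.
Proof.
move=> eqS1 eqS2 S1x; pose c : R := (B - 1)%:~R / 2.
have : digit_union B S1 w (X *m x + c *: w).
  by rewrite -eqS1; exists (X *m x) => //; exists x.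
have Xsub x' : X *m (x - x') = (X *m x + c *: w) - (X *m x' + c *: w).
  by rewrite mulmxBr [X *m x' + _]addrC addrKA.
case=> [[k k_le [y S1y Ey]] | [y S1y Ey]]; exists y => // y' S2y'.
  have : digit_union B S2 w (y' + k%:R *: w) by left; exists k => //; exists y'.
  rewrite -eqS2 => -[_ [x' S2x' <-] Ex']; exists x' => //; left.
  by rewrite Xsub -Ey Ex' [y' + _]addrC addrKA.
have : digit_union B S2 w (- y') by right; exists y'.
rewrite -eqS2 => -[_ [x' S2x' <-] Ex']; exists x' => //; right.
by rewrite Xsub -Ey Ex' opprK addrC.
Qed.

Lemma compact_norm_bounded S : compact S -> exists M, forall x, S x -> `|x| <= M.
Proof.
move=> /compact_bounded[M [_ SM]]; exists (M + 1) => x Sx.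
by apply: (SM (M + 1)) => //; rewrite ltrDl.
Qed.

Lemma set_eqn_subset X w S1 S2 : expanding X ->
  set_eqn B X w S1 -> set_eqn B X w S2 -> compact S1 -> compact S2 -> S2 !=set0 ->
  S1 `<=` S2.
Proof.
move=> expX eqS1 eqS2 cS1 cS2 [z0 S2z0].
have [K diamK] : exists K, forall y z, S1 y -> S2 z -> `|y - z| <= K.
  have [M1 M1S1] := compact_norm_bounded cS1.
  have [M2 M2S2] := compact_norm_bounded cS2.
  exists (M1 + M2) => y z S1y S2z; apply: le_trans (ler_normB _ _) _.
  by rewrite lerD ?M1S1 ?M2S2.
(* Follow the digits of [x] for [n] steps, choosing the same digits in [S2]. *)
have approx n : forall x, S1 x -> exists2 x', S2 x' & `|X ^+ n *m (x - x')| <= K.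
  elim: n => [|n IH] x S1x; first by exists z0; rewrite // expr0 mul1mx diamK.
  have [y S1y lift] := set_eqn_lift eqS1 eqS2 S1x.
  have [y' S2y' yy'] := IH y S1y.
  have [x' S2x' Xxx'] := lift y' S2y'.
  exists x' => //; rewrite exprSr -mulmxE -mulmxA.
  by case: Xxx' => ->; last rewrite -opprB mulmxN normrN.
move=> x S1x; rewrite (closure_id S2).1; last exact: compact_closed cS2.
move=> U /nbhs_ballP[e e_gt0 eU].
have [n small] := expX K e e_gt0.
have [x' S2x' xx'] := approx n x S1x.
by exists x'; split => //; apply: eU; rewrite -ball_normE; apply: small.
Qed.

Lemma set_eqn_unique X w S1 S2 : expanding X ->
  set_eqn B X w S1 -> set_eqn B X w S2 ->
  S1 !=set0 -> compact S1 -> S2 !=set0 -> compact S2 -> S1 = S2.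
Proof.
move=> expX eqS1 eqS2 S10 cS1 S20 cS2.
apply/seteqP; split; first exact: (set_eqn_subset expX eqS1).
exact: (set_eqn_subset expX eqS2).
Qed.

End SetEquation.

Lemma char_poly2_sqr (R : comNzRingType) (M : 'M[R]_2) (a b : R) :
  char_poly M = 'X^2 + a%:P * 'X + b%:P -> M ^+ 2 = - (a *: M) - b%:M.
Proof.
move=> chM; have := Cayley_Hamilton M; rewrite chM !rmorphD !rmorphM /=.
rewrite horner_mx_X !horner_mx_C -expr2 -mulmxE mul_scalar_mx => /eqP.
by rewrite -addrA addr_eq0 opprD => /eqP.
Qed.

Section Companion.
Variables (R : realType) (A B : int).

Lemma companion_block :
  companion R A B = block_mx 0 (- (B%:~R)%:M) 1%:M (- (A%:~R)%:M) :> 'M[R]_(1 + 1).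
Proof.
apply/matrixP => i j; rewrite -(fintype.splitK i) -(fintype.splitK j).
case: (fintype.split i) => i'; case: (fintype.split j) => j'.
all: by rewrite (ord1 i') (ord1 j') ?(block_mxEul, block_mxEur, block_mxEdl, block_mxEdr) !mxE.
Qed.

Lemma e1_col : e1 R = col_mx 1%:M 0 :> 'cV[R]_(1 + 1).
Proof.
apply/matrixP => i j; rewrite -(fintype.splitK i) (ord1 j).
by case: (fintype.split i) => i'; rewrite (ord1 i') ?(col_mxEu, col_mxEd) !mxE.
Qed.

Lemma krylov_companion (X : 'M[R]_2) (u : 'cV[R]_2) :
  X ^+ 2 = - (A%:~R *: X) - (B%:~R)%:M ->
  X *m row_mx u (X *m u) = row_mx u (X *m u) *m companion R A B.
Proof.
move=> X2; rewrite companion_block mul_mx_row.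
rewrite [RHS](mul_row_block u (X *m u) 0 _ 1%:M).
rewrite mulmx0 mulmx1 add0r mulmxA -[X *m X]/(X ^+ 2) X2 mulmxBl mulNmx.
by rewrite -scalemxAl mul_scalar_mx !mulmxN !mul_mx_scalar addrC.
Qed.

Lemma krylov_e1 (X : 'M[R]_2) (u : 'cV[R]_2) : row_mx u (X *m u) *m e1 R = u.
Proof. by rewrite e1_col mul_row_col mulmx1 mulmx0 addr0. Qed.

End Companion.

Theorem lemma2p3 (R : realType) (A B : int) (Mt : 'M[int]_2) (v : 'cV[int]_2)
  (Tt T : set 'cV[R]_2) :
  `|A| <= B -> 2 <= B ->
  char_poly Mt = 'X^2 + A%:P * 'X + B%:P ->
  free [:: toR R v; toR R (Mt *m v)] ->
  Tt !=set0 -> compact Tt -> set_eqn B (toR R Mt) (toR R v) Tt ->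
  T !=set0 -> compact T -> set_eqn B (companion R A B) (e1 R) T ->
  Tt = lin_img (basis_mx R Mt v) T.
Proof.
move=> le_AB le_2B chMt _ Tt0 cTt eqTt T0 cT eqT.
have Mt2 : toR R Mt ^+ 2 = - (A%:~R *: toR R Mt) - (B%:~R)%:M.
  apply: char_poly2_sqr; rewrite /toR -map_char_poly chMt.
  by rewrite !rmorphD !rmorphM /= map_polyX !map_polyC.
have expMt : expanding (toR R Mt).
  have : (2 : R) <= B%:~R by rewrite -(ler_int R) in le_2B.
  have : `|(A%:~R : R)| <= B%:~R by rewrite -intr_norm ler_int.
  by move=> ? ?; apply: (quadratic_expanding _ _ Mt2); lra.
have -> : basis_mx R Mt v = row_mx (toR R v) (toR R Mt *m toR R v).
  by rewrite /basis_mx /toR map_row_mx map_mxM.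
apply: (set_eqn_unique expMt eqTt _ Tt0 cTt).
- by apply: set_eqn_conj eqT; [apply: krylov_companion | apply: krylov_e1].
- exact: image_nonempty.
- apply: continuous_compact cT; apply: continuous_subspaceT.
  exact: mulmx_continuous.
Qed.
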